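(* Let $L>0$ and consider the sixth-order ODE $$\tfrac12\,\theta=\theta^2\bigl(\theta^{(6)}+\theta\bigr).$$ (i) There is no function $\theta\in C^6([-L,L])$, $\theta\not\equiv0$, solving this ODE on $(-L,L)$ with $\theta(\pm L)=\theta'(\pm L)=\theta''(\pm L)=0$. (ii) There is no $\theta\in C^6(\mathbb{R})$, $\theta\not\equiv 0$, with $\theta,\theta',\dots,\theta^{(5)}$ bounded on $\mathbb{R}$, solving this ODE on $\mathbb{R}$ with $\theta(x)\to0$ as $x\to\pm\infty$.
   Context: This is the profile equation for separable blow-up solutions $u=(T-t)^{-1/2}\theta(x)$ of $u_t=u^2(u_{xxxxxx}+u)$. For non-vanishing solutions one has the first integral $\tfrac12\ln|\theta|=\theta^{(5)}\theta'-\theta^{(4)}\theta''+\tfrac12(\theta'')^2+\tfrac12\theta^2+C$, $C\in\mathbb{R}$ a constant. *)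

From Stdlib Require Import Reals.
Open Scope R_scope.

Definition deriv_within (a b : R) (f : R -> R) (x l : R) : Prop :=
  forall eps, 0 < eps -> exists delta, 0 < delta /\
    forall h, h <> 0 -> Rabs h < delta -> a <= x + h <= b ->
      Rabs ((f (x + h) - f x) / h - l) < eps.

Definition cont_within (a b : R) (f : R -> R) (x : R) : Prop :=
  forall eps, 0 < eps -> exists delta, 0 < delta /\
    forall y, a <= y <= b -> Rabs (y - x) < delta -> Rabs (f y - f x) < eps.

(* theta is C^6 on [a,b], with d k its k-th derivative (k <= 6). *)
Definition C6_on (a b : R) (theta : R -> R) (d : nat -> R -> R) : Prop :=
  (forall x, a <= x <= b -> d 0%nat x = theta x) /\
  (forall k x, (k < 6)%nat -> a <= x <= b -> deriv_within a b (d k) x (d (S k) x)) /\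
  (forall x, a <= x <= b -> cont_within a b (d 6%nat) x).

Definition C6_R (theta : R -> R) (d : nat -> R -> R) : Prop :=
  (forall x, d 0%nat x = theta x) /\
  (forall k x, (k < 6)%nat -> derivable_pt_lim (d k) x (d (S k) x)) /\
  continuity (d 6%nat).

Definition profile_ode (theta : R -> R) (d : nat -> R -> R) (x : R) : Prop :=
  / 2 * theta x = (theta x) ^ 2 * (d 6%nat x + theta x).

(* Wherever theta <> 0 the
   profile equation reduces to  theta * (theta^(6) + theta) = 1/2, so
   |theta| small forces |theta^(6)| large ([sixth_derivative_large_where_small]).
   (i)  theta vanishes at -L and is nonzero somewhere; by the intermediate value
        theorem it takes arbitrarily small nonzero values on [-L,L], whereas the
        continuous theta^(6) is bounded there ([no_zero_beside_nonzero]).  The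
        one-sided regularity on [-L,L] is turned into continuity on R by
        composing with the clamp onto [-L,L].
   (ii) Far to the right |theta| < 1/4.  On a window of length 2 M5 + 1 there,
        either theta vanishes (excluded again by [no_zero_beside_nonzero]) or,
        by the mean value theorem applied to the bounded theta^(5)
        ([mean_value_small_slope]), some point has |theta^(6)| < 1, which
        contradicts the reduced equation. *)

From Stdlib Require Import Reals Lra Psatz Classical.
Open Scope R_scope.

Lemma profile_ode_reduced (theta : R -> R) (d : nat -> R -> R) (x : R) :
  profile_ode theta d x -> theta x <> 0 ->
  theta x * (d 6%nat x + theta x) = / 2.
Proof.
  unfold profile_ode; intros Hode Hnz.
  apply (Rmult_eq_reg_l (theta x)); [|exact Hnz].
  transitivity (theta x ^ 2 * (d 6%nat x + theta x)); [ring|].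
  rewrite <- Hode; ring.
Qed.

Lemma sixth_derivative_large_where_small (th g K : R) :
  th * (g + th) = / 2 -> Rabs th * (K + Rabs th) < / 2 -> K < Rabs g.
Proof.
  intros Hrel Hsmall.
  assert (Hprod : Rabs th * Rabs (g + th) = / 2).
  { rewrite <- Rabs_mult, Hrel; apply Rabs_right; lra. }
  pose proof (Rabs_triang g th).
  pose proof (Rabs_pos th).
  destruct (Rle_lt_dec (Rabs g) K) as [Hle|]; [|assumption].
  exfalso; nra.
Qed.

Lemma small_fraction (s K : R) :
  s <> 0 -> 0 <= K ->
  exists r, 0 < r < 1 /\ Rabs (s * r) * (K + Rabs (s * r)) < / 2.
Proof.
  intros Hs HK.
  pose proof (Rabs_pos_lt s Hs) as Hsp.
  set (D := 4 * (K + 1) * (Rabs s + 1)).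
  assert (HD : 1 < D) by (unfold D; nra).
  exists (/ D); split.
  - split; [apply Rinv_0_lt_compat; lra|].
    rewrite <- Rinv_1; apply Rinv_lt_contravar; lra.
  - rewrite Rabs_mult, (Rabs_right (/ D)) by (left; apply Rinv_0_lt_compat; lra).
    assert (Hsmall : Rabs s * / D < / (4 * (K + 1))).
    { replace (Rabs s * / D) with (Rabs s / (Rabs s + 1) * / (4 * (K + 1)))
        by (unfold D; field; lra).
      rewrite <- (Rmult_1_l (/ (4 * (K + 1)))) at 2.
      apply Rmult_lt_compat_r; [apply Rinv_0_lt_compat; lra|].
      apply (Rmult_lt_reg_r (Rabs s + 1)); [lra|].
      unfold Rdiv; rewrite Rmult_assoc, Rinv_l; lra. }
    assert (Hpos : 0 <= Rabs s * / D)
      by (apply Rmult_le_pos; [lra | left; apply Rinv_0_lt_compat; lra]).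
    assert (Hinv : / (4 * (K + 1)) * (4 * (K + 1)) = 1) by (field; lra).
    assert (Hq : / (4 * (K + 1)) <= / 4).
    { apply Rinv_le_contravar; lra. }
    nra.
Qed.

Lemma bounded_on_compact (F : R -> R) (a b : R) :
  a <= b -> continuity F ->
  exists K, 0 <= K /\ forall z, a <= z <= b -> Rabs (F z) <= K.
Proof.
  intros Hab Hc.
  destruct (continuity_ab_maj F a b Hab (fun c _ => Hc c)) as [M [HM _]].
  destruct (continuity_ab_min F a b Hab (fun c _ => Hc c)) as [m [Hm _]].
  exists (Rabs (F M) + Rabs (F m)); split.
  - pose proof (Rabs_pos (F M)); pose proof (Rabs_pos (F m)); lra.
  - intros z Hz; specialize (HM z Hz); specialize (Hm z Hz).
    unfold Rabs; repeat destruct Rcase_abs; lra.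
Qed.

(* On an interval where the reduced equation holds off the zeros of F, with F
   and G continuous, F cannot vanish at one point and not at another:
   between them F takes nonzero values too small for the bounded G. *)
Lemma no_zero_beside_nonzero (F G : R -> R) (a b x y : R) :
  continuity F -> continuity G -> a <= x <= b -> a <= y <= b ->
  F x = 0 -> F y <> 0 ->
  (forall z, a <= z <= b -> F z <> 0 -> F z * (G z + F z) = / 2) -> False.
Proof.
  intros HF HG Hx Hy Fx Fy Hrel.
  destruct (bounded_on_compact G a b ltac:(lra) HG) as [K [HK HGK]].
  destruct (small_fraction (F y) K Fy HK) as [r [Hr Hsmall]].
  set (t := F y * r).
  destruct (IVT_cor (fun z => F z - t) (Rmin x y) (Rmax x y)) as [z [Hz Fz]].
  - intro w; apply continuity_pt_minus; [apply HF | apply continuity_pt_const; now intros u v].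
  - apply Rle_trans with x; [apply Rmin_l | apply Rmax_l].
  - cbv beta; assert (0 <= F y * F y) by nra.
    unfold Rmin, Rmax; destruct (Rle_dec x y); rewrite Fx; unfold t; nra.
  - assert (Hza : a <= z <= b) by (unfold Rmin, Rmax in Hz; destruct Rle_dec; lra).
    assert (Ft : F z = t) by lra.
    assert (Ht : t <> 0) by (unfold t; intro Ht0; apply Rmult_integral in Ht0; lra).
    assert (Hbig := sixth_derivative_large_where_small (F z) (G z) K
      (Hrel z Hza ltac:(rewrite Ft; exact Ht)) ltac:(rewrite Ft; exact Hsmall)).
    specialize (HGK z Hza); lra.
Qed.

Lemma mean_value_small_slope (g g' : R -> R) (M p : R) :
  (forall x, derivable_pt_lim g x (g' x)) -> (forall x, Rabs (g x) <= M) ->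
  exists c, p < c < p + (2 * M + 1) /\ Rabs (g' c) < 1.
Proof.
  intros Hder Hbd.
  assert (HM : 0 <= M) by (specialize (Hbd 0); pose proof (Rabs_pos (g 0)); lra).
  set (q := p + (2 * M + 1)).
  destruct (MVT_cor2 g g' p q ltac:(unfold q; lra) (fun c _ => Hder c))
    as [c [Hmvt Hc]].
  exists c; split; [exact Hc|].
  assert (Hdiff : Rabs (g q - g p) <= 2 * M).
  { eapply Rle_trans; [apply Rabs_triang|]; rewrite Rabs_Ropp.
    pose proof (Hbd q); pose proof (Hbd p); lra. }
  rewrite Hmvt, Rabs_mult in Hdiff.
  replace (q - p) with (2 * M + 1) in Hdiff by (unfold q; ring).
  rewrite (Rabs_right (2 * M + 1)) in Hdiff by lra.
  nra.
Qed.

(* The clamp onto [a,b]: it turns functions continuous relative to [a,b]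
   into functions continuous on R with the same values on [a,b]. *)
Definition clamp (a b z : R) : R := Rmax a (Rmin b z).

Lemma clamp_in (a b z : R) : a <= b -> a <= clamp a b z <= b.
Proof. intros; unfold clamp, Rmax, Rmin; repeat destruct Rle_dec; lra. Qed.

Lemma clamp_id (a b z : R) : a <= z <= b -> clamp a b z = z.
Proof. intros; unfold clamp, Rmax, Rmin; repeat destruct Rle_dec; lra. Qed.

Lemma clamp_lipschitz (a b x y : R) :
  a <= b -> Rabs (clamp a b y - clamp a b x) <= Rabs (y - x).
Proof.
  intros; unfold clamp, Rmax, Rmin, Rabs.
  repeat destruct Rle_dec; repeat destruct Rcase_abs; lra.
Qed.

Lemma clamp_continuity (a b : R) (f : R -> R) : a <= b ->
  (forall x, a <= x <= b -> cont_within a b f x) ->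
  continuity (fun z => f (clamp a b z)).
Proof.
  intros Hab Hc x eps Heps.
  destruct (Hc (clamp a b x) (clamp_in a b x Hab) eps Heps) as [del [Hd Hf]].
  exists del; split; [lra|].
  intros y [_ Hy]; simpl in *; unfold R_dist in *.
  apply Hf; [apply clamp_in; exact Hab|].
  eapply Rle_lt_trans; [apply clamp_lipschitz; exact Hab | exact Hy].
Qed.

Lemma deriv_within_cont (a b : R) (f : R -> R) (x l : R) :
  deriv_within a b f x l -> cont_within a b f x.
Proof.
  intros Hd eps Heps.
  destruct (Hd 1 Rlt_0_1) as [del [Hdel Hf]].
  pose proof (Rabs_pos l) as Hl.
  set (del' := Rmin del (eps / (Rabs l + 1))).
  assert (Hdel' : 0 < del')
    by (apply Rmin_pos; [lra | apply Rdiv_lt_0_compat; lra]).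
  exists del'; split; [exact Hdel'|].
  intros y Hy Hyx.
  destruct (Req_dec y x) as [->|Hne].
  { unfold Rminus; rewrite Rplus_opp_r, Rabs_R0; exact Heps. }
  set (h := y - x).
  assert (Hm1 := Rmin_l del (eps / (Rabs l + 1))).
  assert (Hm2 := Rmin_r del (eps / (Rabs l + 1))).
  specialize (Hf h ltac:(unfold h; lra) ltac:(unfold h, del' in *; lra)
    ltac:(unfold h; lra)).
  replace (x + h) with y in Hf by (unfold h; ring).
  replace (f y - f x) with (h * ((f y - f x) / h - l) + h * l)
    by (field; unfold h; lra).
  eapply Rle_lt_trans; [apply Rabs_triang|].
  rewrite !Rabs_mult.
  pose proof (Rabs_pos h).
  assert (Hhe : Rabs h * (Rabs l + 1) < eps).
  { assert (Hh : Rabs h < eps / (Rabs l + 1)) by (unfold h, del' in *; lra).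
    apply (Rmult_lt_compat_r (Rabs l + 1)) in Hh; [|lra].
    unfold Rdiv in Hh; rewrite Rmult_assoc, Rinv_l in Hh; lra. }
  nra.
Qed.

Lemma no_dirichlet_solution (L : R) (theta : R -> R) (d : nat -> R -> R) (x0 : R) :
  0 < L -> C6_on (- L) L theta d -> - L <= x0 <= L -> theta x0 <> 0 ->
  (forall x, - L < x < L -> profile_ode theta d x) ->
  d 0%nat (- L) = 0 -> d 0%nat L = 0 -> False.
Proof.
  intros HL [H0 [Hd Hc6]] Hx0 Hn Hode Hleft Hright.
  assert (Hab : - L <= L) by lra.
  set (F := fun z => d 0%nat (clamp (- L) L z)).
  set (G := fun z => d 6%nat (clamp (- L) L z)).
  assert (HF : continuity F).
  { apply clamp_continuity; [exact Hab|].
    intros x Hx; exact (deriv_within_cont _ _ _ _ _ (Hd 0%nat x ltac:(lia) Hx)). }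
  assert (HG : continuity G) by (apply clamp_continuity; assumption).
  apply (no_zero_beside_nonzero F G (- L) L (- L) x0 HF HG); try lra;
    unfold F, G; rewrite ?clamp_id by lra.
  - exact Hleft.
  - rewrite H0 by exact Hx0; exact Hn.
  - intros z Hz Hnz; rewrite clamp_id in * by lra.
    assert (Hzo : - L < z < L).
    { destruct (Req_dec z (- L)); [subst; contradiction|].
      destruct (Req_dec z L); [subst; contradiction|]. lra. }
    rewrite H0 in Hnz |- * by exact Hz.
    exact (profile_ode_reduced theta d z (Hode z Hzo) Hnz).
Qed.

Lemma no_decaying_solution (theta : R -> R) (d : nat -> R -> R) (x0 M5 : R) :
  C6_R theta d -> theta x0 <> 0 -> (forall x, Rabs (d 5%nat x) <= M5) ->
  (forall x, profile_ode theta d x) ->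
  (forall eps, 0 < eps -> exists A, forall x, A < x -> Rabs (theta x) < eps) ->
  False.
Proof.
  intros [H0 [Hd Hc6]] Hn HM5 Hode Hdecay.
  assert (Htheta : continuity theta).
  { intro x; apply (continuity_pt_locally_ext (d 0%nat) theta 1 x Rlt_0_1);
      [intros y _; apply H0|].
    apply derivable_continuous_pt; exists (d 1%nat x); apply Hd; lia. }
  assert (HM : 0 <= M5) by (specialize (HM5 0); pose proof (Rabs_pos (d 5%nat 0)); lra).
  assert (Hrel : forall z, theta z <> 0 -> theta z * (d 6%nat z + theta z) = / 2)
    by (intros z; apply profile_ode_reduced, Hode).
  destruct (Hdecay (/ 4) ltac:(lra)) as [A HA].
  set (p := Rmax A x0 + 1).
  assert (Hp := Rmax_l A x0); assert (Hp' := Rmax_r A x0).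
  destruct (classic (exists z, p <= z <= p + (2 * M5 + 1) /\ theta z = 0))
    as [[z [Hz Hz0]] | Hnozero].
  - apply (no_zero_beside_nonzero theta (d 6%nat) x0 z z x0 Htheta Hc6);
      try (unfold p in *; lra); auto.
  - destruct (mean_value_small_slope (d 5%nat) (d 6%nat) M5 p
      (fun x => Hd 5%nat x ltac:(lia)) HM5) as [c [Hc Hslope]].
    assert (Hcz : theta c <> 0)
      by (intro; apply Hnozero; exists c; split; [lra | assumption]).
    assert (Hsmall : Rabs (theta c) < / 4) by (apply HA; unfold p in *; lra).
    pose proof (Rabs_pos (theta c)).
    assert (Hbig := sixth_derivative_large_where_small (theta c) (d 6%nat c) 1
      (Hrel c Hcz) ltac:(nra)).
    lra.
Qed.

Theorem mainTheorem2 (L : R) (HL : 0 < L) :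
  (* (i) no nontrivial C^6([-L,L]) solution with zero Dirichlet/Neumann/2nd-order data *)
  ~ (exists (theta : R -> R) (d : nat -> R -> R),
        C6_on (- L) L theta d /\
        (exists x, - L <= x <= L /\ theta x <> 0) /\
        (forall x, - L < x < L -> profile_ode theta d x) /\
        (forall k, (k <= 2)%nat -> d k (- L) = 0 /\ d k L = 0))
  /\
  (* (ii) no nontrivial bounded C^6(R) solution decaying at +-infinity *)
  ~ (exists (theta : R -> R) (d : nat -> R -> R),
        C6_R theta d /\
        (exists x, theta x <> 0) /\
        (forall k, (k <= 5)%nat -> exists M, forall x, Rabs (d k x) <= M) /\
        (forall x, profile_ode theta d x) /\
        (forall eps, 0 < eps -> exists A, forall x, A < x -> Rabs (theta x) < eps) /\
        (forall eps, 0 < eps -> exists A, forall x, x < - A -> Rabs (theta x) < eps)).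
Proof.
  split.
  - intros (theta & d & HC6 & [x0 [Hx0 Hn]] & Hode & Hbd).
    destruct (Hbd 0%nat ltac:(lia)) as [Hleft Hright].
    exact (no_dirichlet_solution L theta d x0 HL HC6 Hx0 Hn Hode Hleft Hright).
  - intros (theta & d & HC6 & [x0 Hn] & Hbd & Hode & Hdecay & _).
    destruct (Hbd 5%nat ltac:(lia)) as [M5 HM5].
    exact (no_decaying_solution theta d x0 M5 HC6 Hn HM5 Hode Hdecay).
Qed.
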